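(* Let $\mathcal{D}$ be a dome over a convex polygon $P$ lying in the horizontal $xy$-plane, with the dome above it. Let $b_i$ be a vertex of $P$ with interior angle at least $120^\circ$, and let $t_1, t_2, t_3$ be the three dome triangles incident to $b_i$, in order around $b_i$, where $t_1$ and $t_3$ are incident to the two edges of $P$ at $b_i$ (possibly $t_2$ is coplanar with $t_1$ or with $t_3$, but not both). Then $t_2$ has an upward normal, and at least one of $t_1, t_3$ has a downward normal.
   Context: All equilateral triangles have unit edge length. A polyiamond is a polygon that is a union of unit equilateral triangles. A dome over a convex polygon $P$ is the surface consisting of all faces other than $P$ of a convex polyhedron that has $P$ as one face and all of whose other faces are convex polyiamonds; the dome triangles are the unit triangles composing the dome's faces. With the base $P$ in the $xy$-plane, a dome triangle or face has an upward normal if its outward normal has positive $z$-component, and a downward normal if its outward normal has negative $z$-component. *)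

From Stdlib Require List.
From HB Require Import structures.
From mathcomp Require Import all_boot all_order all_algebra.
From mathcomp Require Import all_classical all_reals all_analysis.
Set Implicit Arguments. Unset Strict Implicit. Unset Printing Implicit Defensive.
Import Order.TTheory GRing.Theory Num.Theory.
Local Open Scope ring_scope.
Local Open Scope classical_set_scope.

Record vec (R : realType) := V { vx : R; vy : R; vz : R }.

Definition vadd (R : realType) (u w : vec R) : vec R :=
  V (vx u + vx w) (vy u + vy w) (vz u + vz w).
Definition vsub (R : realType) (u w : vec R) : vec R :=
  V (vx u - vx w) (vy u - vy w) (vz u - vz w).
Definition vscale (R : realType) (k : R) (u : vec R) : vec R :=
  V (k * vx u) (k * vy u) (k * vz u).
Definition vzero (R : realType) : vec R := V 0 0 0.
Definition dot (R : realType) (u w : vec R) : R :=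
  vx u * vx w + vy u * vy w + vz u * vz w.
Definition cross (R : realType) (u w : vec R) : vec R :=
  V (vy u * vz w - vz u * vy w) (vz u * vx w - vx u * vz w)
    (vx u * vy w - vy u * vx w).
Definition norm (R : realType) (u : vec R) : R := Num.sqrt (dot u u).
Definition dist (R : realType) (p q : vec R) : R := norm (vsub p q).

Definition segment (R : realType) (a b : vec R) : set (vec R) :=
  [set x | exists s : R, 0 <= s <= 1 /\ x = vadd (vscale (1 - s) a) (vscale s b)].

Definition noncollinear (R : realType) (p q r : vec R) : Prop :=
  cross (vsub q p) (vsub r p) <> vzero R.

Definition triangle (R : realType) := (vec R * vec R * vec R)%type.

Definition is_vertex (R : realType) (t : triangle R) (v : vec R) : Prop :=
  v = t.1.1 \/ v = t.1.2 \/ v = t.2.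

Definition tri_set (R : realType) (t : triangle R) : set (vec R) :=
  [set x | exists al be ga : R, [/\ 0 <= al, 0 <= be, 0 <= ga, al + be + ga = 1 &
     x = vadd (vadd (vscale al t.1.1) (vscale be t.1.2)) (vscale ga t.2)]].

Definition tri_interior (R : realType) (t : triangle R) : set (vec R) :=
  [set x | exists al be ga : R, [/\ 0 < al, 0 < be, 0 < ga, al + be + ga = 1 &
     x = vadd (vadd (vscale al t.1.1) (vscale be t.1.2)) (vscale ga t.2)]].

Definition unit_equilateral (R : realType) (t : triangle R) : Prop :=
  [/\ dist t.1.1 t.1.2 = 1, dist t.1.2 t.2 = 1 & dist t.2 t.1.1 = 1].

Definition convex_polyhedron (R : realType) (K : set (vec R)) : Prop :=
  [/\ (exists H : seq (vec R * R),
         K = [set x | forall h, List.In h H -> dot h.1 x <= h.2]),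
      (exists M : R, forall x, K x -> [/\ `|vx x| <= M, `|vy x| <= M & `|vz x| <= M]) &
      (exists x (r : R), 0 < r /\ forall y, dist y x < r -> K y)].

(* the plane {dot n x = c} supports K, with K on the side dot n x <= c
   (so n is an outward normal) *)
Definition supports (R : realType) (K : set (vec R)) (n : vec R) (c : R) : Prop :=
  n <> vzero R /\ forall x, K x -> dot n x <= c.

(* F is a face (2-dimensional face, i.e. facet) of K *)
Definition face (R : realType) (K F : set (vec R)) : Prop :=
  exists (n : vec R) (c : R), [/\ supports K n c,
    F = K `&` [set x | dot n x = c] &
    exists p q r, [/\ F p, F q, F r & noncollinear p q r]].

(* A dome over P with dome triangles TS: K is a convex polyhedron having P
   as a face, lying in the xy-plane with K above it; every other face of K
   is a (convex) polyiamond, namely the union of the unit triangles of TS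
   lying in it; TS consists exactly of these composing triangles, which do
   not overlap. *)
Definition is_dome (R : realType) (K P : set (vec R)) (TS : seq (triangle R)) : Prop :=
  convex_polyhedron K /\
  face K P /\
  (forall x, P x -> vz x = 0) /\
  (forall x, K x -> 0 <= vz x) /\
  (forall t, List.In t TS ->
     unit_equilateral t /\ exists F, [/\ face K F, F <> P & (tri_set t `<=` F)]) /\
  (forall F, face K F -> F <> P ->
     F = \bigcup_(t in [set t | List.In t TS /\ tri_set t `<=` F]) tri_set t) /\
  (forall t t', List.In t TS -> List.In t' TS ->
     tri_interior t `&` tri_interior t' !=set0 -> tri_set t = tri_set t').

Definition upward_normal (R : realType) (K : set (vec R)) (t : triangle R) : Prop :=
  exists n c, [/\ supports K n c, (forall v, is_vertex t v -> dot n v = c) & 0 < vz n].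
Definition downward_normal (R : realType) (K : set (vec R)) (t : triangle R) : Prop :=
  exists n c, [/\ supports K n c, (forall v, is_vertex t v -> dot n v = c) & vz n < 0].

Definition polygon_edge (R : realType) (P : set (vec R)) (a b : vec R) : Prop :=
  a <> b /\ exists (m : vec R) (d : R), [/\ vz m = 0, m <> vzero R,
    (forall x, P x -> dot m x <= d) & P `&` [set x | dot m x = d] = segment a b].

Definition angle_at (R : realType) (b a c : vec R) : R :=
  acos (dot (vsub a b) (vsub c b) / (norm (vsub a b) * norm (vsub c b))).

Definition incident_to_edge (R : realType) (t : triangle R) (b a : vec R) : Prop :=
  exists v, [/\ is_vertex t v, v <> b & segment b a v].

Definition share_side (R : realType) (t t' : triangle R) : Prop :=
  exists u v : vec R, [/\ u <> v, is_vertex t u, is_vertex t v, is_vertex t' u & is_vertex t' v].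

From Stdlib Require List.
From HB Require Import structures.
From mathcomp Require Import all_boot all_order all_algebra.
From mathcomp Require Import all_classical all_reals all_analysis.
From mathcomp Require Import ring lra.
Import Order.TTheory GRing.Theory Num.Theory.
Local Open Scope ring_scope.
Local Open Scope classical_set_scope.
Set Implicit Arguments. Unset Strict Implicit. Unset Printing Implicit Defensive.

(* Work relative to [b].  Let [U], [W] be the unit directions of the base edges at [b]
   and [P], [Q] the apexes of [t1], [t3]: unit vectors above the base plane with
   [P.U = Q.W = 1/2].  Since a unit vector at 60 degrees from both [U] and [W] is
   horizontal, the triangle [t2], which shares a side with both, is [b, b + P, b + Q],
   so [P.Q = 1/2].  Near [b] the dome is the convex cone spanned by [U, P, Q, W], and
   the outward normals of [t1], [t2], [t3] are its facet normals [N1 _|_ U, P],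
   [N2 _|_ P, Q], [N3 _|_ Q, W].  [N1] points down as soon as [P] leans away from [W],
   and [N3] as soon as [Q] leans away from [U]; convexity and [|P - Q| = 1] forbid both
   to lean inwards and force [(P x Q).e_z > 0], while [N2] is a positive multiple of
   [P x Q]. *)

(* Coordinates of the configuration at [b]: the edge directions are [U = (1,0,0)]
   and [W = (-C,s,0)], and the apexes of the two edge triangles are
   [P = U/2 + x U' + be e_z] and [Q = W/2 + y W' + de e_z], where [U'], [W'] are the
   horizontal unit normals to [U], [W] pointing into the angle.  The last three fields
   say [|P - Q| = 1], [Q] lies below the plane of [t1] and [P] below that of [t3]. *)
Record apex_config {R : realFieldType} (C s x be y de : R) : Prop := ApexConfig {
  apex_rot : C^+2 + s^+2 = 1;
  apex_C_ge : 1/2 <= C;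
  apex_C_lt1 : C < 1;
  apex_s_gt0 : 0 < s;
  apex_P_unit : x^+2 + be^+2 = 3/4;
  apex_be_gt0 : 0 < be;
  apex_Q_unit : y^+2 + de^+2 = 3/4;
  apex_de_gt0 : 0 < de;
  apex_PQ : -C/4 + s*(x+y)/2 + x*y*C + be*de = 1/2;
  apex_Q_below : x*de - be*y <= be*s/2 - be*y*(1-C);
  apex_P_below : -(x*de - be*y) <= de*s/2 - x*de*(1-C) }.

Section ApexInequalities.
Variable R : realFieldType.
Implicit Types C s x be y de eta : R.

Lemma apex_eta_identities C s x be y de eta :
  x^+2 + be^+2 = 3/4 -> y^+2 + de^+2 = 3/4 ->
  -C/4 + s*(x+y)/2 + x*y*C + be*de = 1/2 ->
  eta = (1-C)/4 - x*y*(1-C) + s*(x+y)/2 ->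
  x*y + be*de = 3/4 - eta /\ (x*de - be*y)^+2 = eta * (3/2 - eta).
Proof.
move=> hP hQ hPQ ->.
have hY : x*y + be*de = 3/4 - ((1-C)/4 - x*y*(1-C) + s*(x+y)/2).
  have -> : x*y + be*de = (-C/4 + s*(x+y)/2 + x*y*C + be*de) + C/4 - s*(x+y)/2 + x*y*(1-C)
    by ring.
  by rewrite hPQ; field.
split=> //.
have -> : (x*de - be*y)^+2 = (x^+2 + be^+2)*(y^+2 + de^+2) - (x*y + be*de)^+2 by ring.
by rewrite hP hQ hY; field.
Qed.

Lemma apexes_not_both_inward C s x be y de :
  apex_config C s x be y de -> 0 <= x -> 0 <= y -> False.
Proof.
case=> hCs hC hC1 hs hP hbe hQ hde hPQ hA hB hx hy.
have [eta def_eta] : exists eta, eta = (1-C)/4 - x*y*(1-C) + s*(x+y)/2 by eexists.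
have [hY hX] := apex_eta_identities hP hQ hPQ def_eta.
have hYpos : 0 < x*y + be*de.
  by have := mulr_ge0 hx hy; have := mulr_gt0 hbe hde; lra.
have e0 : 0 < 1 - C by lra.
have [X def_X] : exists X, X = x*de - be*y by eexists.
rewrite -def_X in hA hB hX.
(* Either way [X^2 < 3/4 * eta], so [eta > 3/4], against [x*y + be*de > 0]. *)
case: (lerP 0 X) => hX0.
- have hXa : X <= x*de by rewrite def_X; nra.
  have hsy : 0 <= s/2 - y*(1-C) by nra.
  have h1 : X^+2 <= (be*(s/2 - y*(1-C))) * (x*de) by nra.
  have h2 : X^+2 <= 3/4 * (x*(s/2 - y*(1-C))).
    apply: (le_trans h1); have : 0 <= x*(s/2 - y*(1-C)) by nra.
    nra.
  have h3 : eta - x*(s/2 - y*(1-C)) = (1-C)/4 + s*y/2 by rewrite def_eta; ring.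
  nra.
- have hXa : - X <= be*y by rewrite def_X; nra.
  have hsx : 0 <= s/2 - x*(1-C) by nra.
  have h1 : X^+2 <= (de*(s/2 - x*(1-C))) * (be*y) by nra.
  have h2 : X^+2 <= 3/4 * (y*(s/2 - x*(1-C))).
    apply: (le_trans h1); have : 0 <= y*(s/2 - x*(1-C)) by nra.
    nra.
  have h3 : eta - y*(s/2 - x*(1-C)) = (1-C)/4 + s*x/2 by rewrite def_eta; ring.
  nra.
Qed.

Lemma apex_cross_z_gt0 C s x be y de :
  apex_config C s x be y de -> 0 < s/4 + C*(x+y)/2 - x*y*s.
Proof.
move=> hcfg; have [hCs hC hC1 hs hP hbe hQ hde hPQ _ _] := hcfg.
(* Otherwise [x*y >= 1/4]: [x], [y] are not both non-negative, and if both are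
   negative then so is [eta]. *)
rewrite ltNge; apply/negP => hneg.
have [eta def_eta] : exists eta, eta = (1-C)/4 - x*y*(1-C) + s*(x+y)/2 by eexists.
have [hY hX] := apex_eta_identities hP hQ hPQ def_eta.
have eta0 : 0 <= eta.
  by rewrite leNgt; apply/negP => ?; have := sqr_ge0 (x*de - be*y); rewrite hX; nra.
have hs2 : s^+2 = (1-C)*(1+C) by nra.
have h1 : C*(s*(x+y)/2) <= (x*y - 1/4) * s^+2 by nra.
have h2 : C*eta <= (1-C)*(x*y - 1/4).
  have -> : C*eta = C*(1-C)/4 - C*x*y*(1-C) + C*(s*(x+y)/2) by rewrite def_eta; ring.
  have : (x*y - 1/4) * s^+2 = (x*y-1/4)*(1-C) - C*(1-C)/4 + C*x*y*(1-C) by rewrite hs2; ring.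
  lra.
have hxy : 1/4 <= x*y by nra.
case: (lerP 0 x) => hx.
- by apply: (apexes_not_both_inward hcfg); nra.
- have hy : y < 0 by nra.
  have : eta <= s*(x+y)/2 by rewrite def_eta; nra.
  nra.
Qed.

End ApexInequalities.

Section Vectors.
Variable R : realType.
Implicit Types U W N P Q X Y D : vec R.

Lemma vecE X Y : vx X = vx Y -> vy X = vy Y -> vz X = vz Y -> X = Y.
Proof. by case: X => ? ? ?; case: Y => ? ? ? /= -> -> ->. Qed.

Lemma dotC X Y : dot X Y = dot Y X.
Proof. by rewrite /dot; ring. Qed.

Lemma dot_ge0 X : 0 <= dot X X.
Proof. by rewrite /dot; nra. Qed.

Lemma dot_gt0 X : X <> vzero R -> 0 < dot X X.
Proof.
case: X => x y z hX; rewrite lt_neqAle dot_ge0 andbT; apply/eqP => h0.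
by apply: hX; congr V; move: h0; rewrite /dot /=; nra.
Qed.

Lemma dot_addsq X Y : dot (vadd X Y) (vadd X Y) = dot X X + 2 * dot X Y + dot Y Y.
Proof. by rewrite /dot /=; ring. Qed.

Lemma dot_subsq X Y : dot (vsub X Y) (vsub X Y) = dot X X - 2 * dot X Y + dot Y Y.
Proof. by rewrite /dot /=; ring. Qed.

Lemma dot_e1 X : dot X (V 1 0 0) = vx X.
Proof. by rewrite /dot /=; ring. Qed.

Lemma dot_cross_l P Q : dot (cross P Q) P = 0.
Proof. by rewrite /dot /=; ring. Qed.

(* [N x (P x Q) = (N.Q) P - (N.P) Q] and [X x (N x X) = (X.X) N - (N.X) X]. *)
Lemma orthogonal_cross_parallel N P Q : dot N P = 0 -> dot N Q = 0 ->
  vscale (dot (cross P Q) (cross P Q)) N = vscale (dot N (cross P Q)) (cross P Q).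
Proof.
set X := cross P Q => hP hQ.
have e : vsub (vscale (dot X X) N) (vscale (dot N X) X)
       = vsub (vscale (dot N Q) (cross X P)) (vscale (dot N P) (cross X Q)).
  by apply: vecE; rewrite /X /dot /=; ring.
move: e; rewrite hP hQ => e; apply: vecE.
- by apply/eqP; rewrite -subr_eq0; move/(congr1 (@vx R)): e => /= ->; rewrite !mul0r subrr.
- by apply/eqP; rewrite -subr_eq0; move/(congr1 (@vy R)): e => /= ->; rewrite !mul0r subrr.
- by apply/eqP; rewrite -subr_eq0; move/(congr1 (@vz R)): e => /= ->; rewrite !mul0r subrr.
Qed.

Lemma orthogonal_cross_pos N P Q D : N <> vzero R -> dot N P = 0 -> dot N Q = 0 ->
  dot N D <= 0 -> dot (cross P Q) D < 0 ->
  exists2 k, 0 < k & N = vscale k (cross P Q).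
Proof.
set X := cross P Q => hN hP hQ hND hXD.
have hX : X <> vzero R by move=> X0; move: hXD; rewrite X0 /dot /= !mul0r !addr0 ltxx.
have XX := dot_gt0 hX.
have eN : N = vscale (dot N X / dot X X) X.
  have scale (a b : R) : dot X X * a = dot N X * b -> a = dot N X / dot X X * b.
    by move=> h; apply: (mulfI (lt0r_neq0 XX)); rewrite h; field; exact: lt0r_neq0.
  have e := orthogonal_cross_parallel hP hQ.
  by apply: vecE; apply: scale; [move/(congr1 (@vx R)): e | move/(congr1 (@vy R)): e
    | move/(congr1 (@vz R)): e].
exists (dot N X / dot X X) => //.
have hk : dot N X / dot X X * dot X D <= 0.
  by move: hND; rewrite {1}eN /dot /=; congr (_ <= _); ring.
rewrite lt_neqAle; apply/andP; split.
  by apply/eqP => k0; apply: hN; rewrite eN -k0 /vscale !mul0r.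
by rewrite -(nmulr_rle0 _ hXD) mulrC.
Qed.

End Vectors.

Section Frames.
Variable R : realType.
Implicit Types U W N P Q X Y D : vec R.

(* [(U, U', e_z)] is an orthonormal basis, of either orientation, with [U] and [U']
   horizontal. *)
Definition horizontal_frame (U U' : vec R) : Prop :=
  exists u1 u2 e : R,
    [/\ u1^+2 + u2^+2 = 1, e^+2 = 1, U = V u1 u2 0 & U' = V (- (e * u2)) (e * u1) 0].

Definition frame_coords (U U' X : vec R) : vec R := V (dot X U) (dot X U') (vz X).

Lemma dot_horizontal_frame U U' X Y : horizontal_frame U U' ->
  dot X Y = dot X U * dot Y U + dot X U' * dot Y U' + vz X * vz Y.
Proof.
case=> u1 [u2 [e [hu he -> ->]]]; case: X => x1 x2 x3; case: Y => y1 y2 y3; rewrite /dot /=.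
rewrite [RHS](_ : _ = (x1*y1 + x2*y2) * (u1^+2 + u2^+2)
    + (e^+2 - 1) * ((x1*u2 - x2*u1) * (y1*u2 - y2*u1)) + x3*y3); last by ring.
by rewrite he hu subrr mul0r addr0 mulr1.
Qed.

Lemma dot_frame_coords U U' X Y : horizontal_frame U U' ->
  dot (frame_coords U U' X) (frame_coords U U' Y) = dot X Y.
Proof. by move=> hF; rewrite (dot_horizontal_frame X Y hF). Qed.

Lemma frame_coords_base U U' : horizontal_frame U U' -> frame_coords U U' U = V 1 0 0.
Proof.
case=> u1 [u2 [e [hu _ -> ->]]].
by apply: vecE; rewrite /= /dot /=; [rewrite -hu; ring | ring | ].
Qed.

Lemma exists_frame_toward U W : vz U = 0 -> vz W = 0 -> dot U U = 1 -> dot W W = 1 ->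
  (dot U W)^+2 < 1 -> exists U', horizontal_frame U U' /\ 0 < dot W U'.
Proof.
case: U => u1 u2 u3; case: W => w1 w2 w3 /= -> ->; rewrite /dot /= !mulr0 !addr0 => hU hW hUW.
set sigma := u1 * w2 - u2 * w1.
have hsigma : sigma != 0.
  apply/eqP => s0; move: hUW.
  have -> : (u1 * w1 + u2 * w2)^+2 = (u1 * u1 + u2 * u2) * (w1 * w1 + w2 * w2) - sigma^+2
    by rewrite /sigma; ring.
  by rewrite hU hW s0; lra.
exists (V (- (Num.sg sigma * u2)) (Num.sg sigma * u1) 0); split.
  by exists u1, u2, (Num.sg sigma); rewrite sqr_sg hsigma; split=> //; rewrite -hU; ring.
have -> : w1 * - (Num.sg sigma * u2) + w2 * (Num.sg sigma * u1) + 0 * 0 = Num.sg sigma * sigma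
  by rewrite /sigma; ring.
by rewrite -normrEsg normr_gt0.
Qed.

End Frames.

Section ConeNormals.
Variable R : realType.
Implicit Types U W N P Q X Y : vec R.

(* [N] is the outward normal of the cone facet spanned by [A] and [B], the other
   edges [Y], [Z] of the cone lying on its inner side. *)
Definition facet_normal (N A B Y Z : vec R) : Prop :=
  [/\ N <> vzero R, dot N A = 0, dot N B = 0, dot N Y <= 0 & dot N Z <= 0].

Lemma facet_normal_coords U U' N A B Y Z : horizontal_frame U U' ->
  facet_normal N A B Y Z ->
  facet_normal (frame_coords U U' N) (frame_coords U U' A) (frame_coords U U' B)
    (frame_coords U U' Y) (frame_coords U U' Z).
Proof.
move=> hF [hN hA hB hY hZ]; split; rewrite ?dot_frame_coords // => N0.
by have := dot_gt0 hN; rewrite -(dot_frame_coords N N hF) N0 /dot /=; lra.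
Qed.

Lemma edge_facet_normal U U' W P Q N : horizontal_frame U U' -> vz W = 0 ->
  0 < dot W U' -> 0 < vz P -> facet_normal N U P W Q ->
  (dot P U' < 0 -> vz N < 0) /\ dot P U' * vz Q <= vz P * dot Q U'.
Proof.
move=> hF hWz hWU' hPz [hN hNU hNP hNW hNQ].
have F := fun X Y => dot_horizontal_frame X Y hF.
have eP : dot N U' * dot P U' + vz N * vz P = 0 by move: hNP; rewrite F hNU mul0r add0r.
have eW : dot N W = dot N U' * dot W U' by rewrite F hNU hWz !mul0r mulr0 !addr0 add0r.
have eQ : dot N Q = dot N U' * dot Q U' + vz N * vz Q by rewrite F hNU mul0r add0r.
have eN : 0 < (dot N U')^+2 + (vz N)^+2.
  by have := dot_gt0 hN; rewrite F hNU mul0r add0r !expr2.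
have hn : dot N U' < 0.
  rewrite lt_neqAle; apply/andP; split; last by move: hNW; rewrite eW; nra.
  apply/eqP => n0; move: eP; rewrite n0 mul0r add0r => /eqP.
  by rewrite mulf_eq0 (gt_eqF hPz) orbF => /eqP Nz0; move: eN; rewrite n0 Nz0 expr0n addr0 ltxx.
split=> [hx|].
  have hnx : 0 < dot N U' * dot P U' by rewrite nmulr_rgt0.
  by rewrite -(pmulr_llt0 _ hPz); lra.
have : dot N U' * (vz P * dot Q U' - dot P U' * vz Q) <= 0.
  have -> : dot N U' * (vz P * dot Q U' - dot P U' * vz Q)
      = vz P * dot N Q - vz Q * (dot N U' * dot P U' + vz N * vz P) by rewrite eQ; ring.
  by rewrite eP mulr0 subr0 pmulr_rle0.
by rewrite (nmulr_rle0 _ hn) subr_ge0.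
Qed.

Lemma facet_normal_up (C s : R) P Q N : 0 < s -> 0 < vz P -> vx P = 1/2 ->
  facet_normal N P Q (V 1 0 0) (V (-C) s 0) ->
  vx (cross P Q) <= 0 -> dot (cross P Q) (V (-C) s 0) <= 0 -> 0 < vz (cross P Q) ->
  0 < vz N.
Proof.
move=> hs hPz hPx [hN hNP hNQ hNU hNW] hX1 hXW hX3.
have split_D Y : dot Y (V (1 - C) s 0) = vx Y + dot Y (V (-C) s 0).
  by rewrite /dot /=; ring.
have hXD : dot (cross P Q) (V (1 - C) s 0) < 0.
  move: (cross P Q) (dot_cross_l P Q) hX1 hXW hX3 => X.
  rewrite /dot /= hPx !mulr0 !addr0 => hXP hX1 hXW hX3.
  case: (ltrP (vx X) 0) => hX1'; first by lra.
  have X10 : vx X = 0 by lra.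
  rewrite X10 mul0r add0r in hXP; rewrite X10 mul0r add0r in hXW.
  have hy : vy X < 0.
    rewrite lt_neqAle -(pmulr_rle0 _ hs) mulrC hXW andbT; apply/eqP => y0.
    by move: hXP; rewrite y0 mul0r add0r => /eqP; rewrite mulf_eq0 !gt_eqF.
  by rewrite X10 mul0r add0r; nra.
have hND : dot N (V (1 - C) s 0) <= 0 by rewrite split_D -dot_e1; lra.
by have [k hk ->] := orthogonal_cross_pos hN hNP hNQ hND hXD; rewrite /= mulr_gt0.
Qed.

End ConeNormals.

Section VertexCone.
Variable R : realType.
Implicit Types U W N P Q : vec R.

(* Seen from a vertex of the base: [U] is a horizontal side of a unit triangle at that
   vertex and [P] its third vertex, strictly above the base plane. *)
Definition unit_apex U P : Prop :=
  [/\ vz U = 0, dot U U = 1, dot P P = 1, dot P U = 1/2 & 0 < vz P].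

Lemma unit_apex_coords U' U W P : horizontal_frame U U' -> unit_apex W P ->
  unit_apex (frame_coords U U' W) (frame_coords U U' P).
Proof. by move=> hF [hWz hWW hPP hPW hPz]; split; rewrite ?dot_frame_coords. Qed.

Lemma normalized_cone_normals (C s : R) P Q N1 N2 N3 :
  C^+2 + s^+2 = 1 -> 1/2 <= C -> C < 1 -> 0 < s ->
  unit_apex (V 1 0 0) P -> unit_apex (V (-C) s 0) Q -> dot P Q = 1/2 ->
  facet_normal N1 (V 1 0 0) P (V (-C) s 0) Q ->
  facet_normal N2 P Q (V 1 0 0) (V (-C) s 0) ->
  facet_normal N3 (V (-C) s 0) Q (V 1 0 0) P ->
  0 < vz N2 /\ (vz N1 < 0 \/ vz N3 < 0).
Proof.
move=> hCs hC hC1 hs [_ _ hPP hPx hPz] [_ _ hQQ hQW hQz] hPQ hN1 hN2 hN3.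
rewrite dot_e1 in hPx.
have frameU : horizontal_frame (V 1 0 0) (V 0 1 0 : vec R).
  by exists 1, 0, 1; split; rewrite ?expr1n ?expr0n ?addr0 //; apply: vecE => /=; ring.
have frameW : horizontal_frame (V (-C) s 0) (V s C 0).
  by exists (-C), s, (-1); split; rewrite ?sqrrN ?expr1n //; apply: vecE => /=; ring.
have dotW' X : dot X (V s C 0) = s * vx X + C * vy X by rewrite /dot /=; ring.
have dote2 (X : vec R) : dot X (V 0 1 0) = vy X by rewrite /dot /=; ring.
have [y hy] : exists y, dot Q (V s C 0) = y by eexists.
have hQx : vx Q = - C / 2 + y * s.
  by rewrite -dot_e1 (dot_horizontal_frame _ _ frameW) hQW hy /dot /=; ring.
have hQy : vy Q = s / 2 + y * C.
  by rewrite -dote2 (dot_horizontal_frame _ _ frameW) hQW hy /dot /=; ring.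
have sW : 0 < dot (V (-C) s 0) (V 0 1 0) by rewrite dote2.
have sU : 0 < dot (V 1 0 0) (V s C 0) by rewrite dotW' /= mulr1 mulr0 addr0.
have [hN1z hQ_below] := edge_facet_normal frameU (erefl : vz (V (-C) s 0) = 0) sW hPz hN1.
have [hN3z hP_below] := edge_facet_normal frameW (erefl : vz (V 1 0 0) = 0) sU hQz hN3.
rewrite !dote2 hQy in hN1z hQ_below; rewrite (dotW' P) hPx hy in hP_below hN3z.
move: hQQ; rewrite (dot_horizontal_frame _ _ frameW) hQW hy /= => hQQ.
move: hPP hPQ; rewrite /dot hPx hQx hQy => hPP hPQ.
have hcfg : apex_config C s (vy P) (vz P) y (vz Q).
  by split=> //; rewrite ?expr2; nra.
split.
  apply: (facet_normal_up hs hPz hPx hN2); rewrite /dot /= ?hPx ?hQx ?hQy; first by nra.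
    have := congr1 (fun t => vz P * y * t) hCs; rewrite /= mulr1; lra.
  by have := apex_cross_z_gt0 hcfg; nra.
case: (ltrP (vy P) 0) => [/hN1z|hx]; [by left | right; apply: hN3z].
by rewrite ltNge; apply/negP => hy0; apply: apexes_not_both_inward hcfg hx hy0.
Qed.

Lemma vertex_cone_normals U W P Q N1 N2 N3 :
  unit_apex U P -> unit_apex W Q -> -1 < dot U W <= -1/2 -> dot P Q = 1/2 ->
  facet_normal N1 U P W Q -> facet_normal N2 P Q U W -> facet_normal N3 W Q U P ->
  0 < vz N2 /\ (vz N1 < 0 \/ vz N3 < 0).
Proof.
move=> hUP hWQ /andP[hUW1 hUW2] hPQ hN1 hN2 hN3.
have [hUz hUU _ _ _] := hUP; have [hWz hWW _ _ _] := hWQ.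
have [U' [hF hs]] : exists U', horizontal_frame U U' /\ 0 < dot W U'.
  by apply: exists_frame_toward => //; nra.
set f := frame_coords U U'.
have fU : f U = V 1 0 0 by apply: frame_coords_base.
have fW : f W = V (- (- dot U W)) (dot W U') 0 by rewrite opprK dotC /f /frame_coords hWz.
have hCs : (- dot U W)^+2 + (dot W U')^+2 = 1.
  by move: hWW; rewrite (dot_horizontal_frame _ _ hF) hWz mulr0 addr0 sqrrN dotC !expr2.
have fN N A B Y Z := @facet_normal_coords _ U U' N A B Y Z hF.
have fA := @unit_apex_coords U' U _ _ hF.
apply: (@normalized_cone_normals (- dot U W) (dot W U') (f P) (f Q) (f N1) (f N2) (f N3));
  rewrite -?fU -?fW /f ?dot_frame_coords //; try lra.
- exact: fA.
- exact: fA.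
- exact: fN hN1.
- exact: fN hN2.
- exact: fN hN3.
Qed.

End VertexCone.

Section EdgeDirections.
Variable R : realType.
Implicit Types U W P Q X Y : vec R.

(* [cos pi = cos (t + 2 t)] is the cubic [(2 c - 1)^2 (c + 1) = 0] in [c = cos t]. *)
Lemma cos_pi3 : cos (pi / 3 : R) = 1 / 2.
Proof.
set t := pi / 3 : R.
have ht : t + t *+ 2 = pi by rewrite /t; field.
have hc : 0 < cos t.
  by apply: cos_gt0_pihalf; have := pi_gt0 R; rewrite /t => h; apply/andP; split; lra.
have e := cosD t (t *+ 2).
rewrite ht cospi cos_mulr2n sin_mulr2n in e.
have hs := sin2cos2 t.
move: (cos t) (sin t) e hs hc => c s e hs hc.
have : (2 * c - 1)^+2 * (c + 1) = 0.
  rewrite [LHS](_ : _ = c * (c ^+ 2 *+ 2 - 1) - s * ((c * s) *+ 2) + 1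
      + 2 * c * (s^+2 - (1 - c^+2))); last by rewrite !mulr2n; ring.
  by rewrite -e hs subrr mulr0 addr0 addNr.
move/eqP; rewrite mulf_eq0 => /orP [|/eqP]; last by lra.
by rewrite sqrf_eq0 => /eqP; lra.
Qed.

Lemma cos_2pi3 : cos (2 * pi / 3 : R) = - 1 / 2.
Proof.
have -> : (2 * pi / 3 : R) = (pi / 3) *+ 2 by rewrite mulr2n; field.
by rewrite cos_mulr2n cos_pi3 mulr2n; field.
Qed.

Lemma le_cos_of_le_acos (x y : R) : -1 <= x <= 1 -> 0 <= y <= pi -> y <= acos x ->
  x <= cos y.
Proof.
move=> hx hy hyx; rewrite leNgt; apply/negP => hlt.
have hacos : (acos x \in `[0, pi])%R by rewrite in_itv /= acos_ge0 // acos_lepi.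
have hy' : (y \in `[0, pi])%R by rewrite in_itv.
move: hlt; rewrite -{1}(acosK (_ : (x \in `[-1, 1])%R)) ?in_itv //.
by rewrite ltr_cos // => /(le_lt_trans hyx); rewrite ltxx.
Qed.

Lemma dot_unit_bounds X Y : dot X X = 1 -> dot Y Y = 1 -> -1 <= dot X Y <= 1.
Proof.
move=> hX hY; have := dot_ge0 (vsub X Y); have := dot_ge0 (vadd X Y).
by rewrite dot_subsq dot_addsq hX hY => ? ?; apply/andP; split; lra.
Qed.

Lemma norm_scale (k : R) X : norm (vscale k X) = `|k| * norm X.
Proof.
rewrite /norm -sqrtr_sqr -sqrtrM ?sqr_ge0 //; congr Num.sqrt.
by rewrite /dot /=; ring.
Qed.

Lemma angle_at_unit_dirs (b a c : vec R) (k l : R) : 0 < k -> 0 < l ->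
  norm (vscale k (vsub a b)) = 1 -> norm (vscale l (vsub c b)) = 1 ->
  angle_at b a c = acos (dot (vscale k (vsub a b)) (vscale l (vsub c b))).
Proof.
move=> hk hl; rewrite !norm_scale !gtr0_norm // => hA hC; rewrite /angle_at; congr acos.
have -> : norm (vsub a b) = k^-1 by apply: (mulfI (lt0r_neq0 hk)); rewrite hA mulfV ?lt0r_neq0.
have -> : norm (vsub c b) = l^-1 by apply: (mulfI (lt0r_neq0 hl)); rewrite hC mulfV ?lt0r_neq0.
by rewrite /dot /=; field; rewrite !lt0r_neq0.
Qed.

Lemma segment_dir (b a u : vec R) : segment b a u ->
  exists k : R, 0 <= k <= 1 /\ vsub u b = vscale k (vsub a b).
Proof. by move=> [k [hk ->]]; exists k; split=> //; apply: vecE; rewrite /=; ring. Qed.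

Lemma segment_dir_pos (b a u : vec R) : segment b a u -> u <> b ->
  exists2 k : R, 0 < k & vsub u b = vscale k (vsub a b).
Proof.
move=> /segment_dir [k [/andP[hk0 _] eu]] hub; exists k => //.
rewrite lt_neqAle hk0 andbT; apply/eqP => k0; apply: hub; apply: vecE;
  apply/eqP; rewrite -subr_eq0; apply/eqP.
- by move/(congr1 (@vx R)): eu => /= ->; rewrite -k0 mul0r.
- by move/(congr1 (@vy R)): eu => /= ->; rewrite -k0 mul0r.
- by move/(congr1 (@vz R)): eu => /= ->; rewrite -k0 mul0r.
Qed.

Lemma edge_dirs_dot_le (b a c u w : vec R) : segment b a u -> segment b c w ->
  u <> b -> w <> b -> dot (vsub u b) (vsub u b) = 1 -> dot (vsub w b) (vsub w b) = 1 ->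
  2 * pi / 3 <= angle_at b a c -> dot (vsub u b) (vsub w b) <= - 1 / 2.
Proof.
move=> /segment_dir_pos su /segment_dir_pos sw /su [k hk eu] /sw [l hl ew] hU hW.
have unit X : dot X X = 1 -> norm X = 1 by rewrite /norm => ->; rewrite sqrtr1.
rewrite (angle_at_unit_dirs hk hl) -?eu -?ew ?unit // -cos_2pi3.
apply: le_cos_of_le_acos; first exact: dot_unit_bounds.
by have := pi_gt0 R => ?; apply/andP; split; lra.
Qed.

End EdgeDirections.

Section MiddleTriangle.
Variable R : realType.
Implicit Types U W P Q X Y : vec R.

(* [X.(U + W) = 1] while [|U + W| <= 1], so the horizontal part of [X] already has
   length at least [1]. *)
Lemma unit_equidistant_horizontal U W X : vz U = 0 -> vz W = 0 -> dot U U = 1 ->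
  dot W W = 1 -> dot U W <= - 1 / 2 -> dot X X = 1 -> dot X U = 1 / 2 -> dot X W = 1 / 2 ->
  vz X = 0.
Proof.
case: U => u1 u2 u3; case: W => w1 w2 w3; case: X => x1 x2 x3; rewrite /dot /= => -> ->.
rewrite !mulr0 !addr0 => hU hW hUW hX hXU hXW.
have hS : 0 <= 1 - ((u1 + w1)^+2 + (u2 + w2)^+2) by nra.
have hXS : x1 * (u1 + w1) + x2 * (u2 + w2) = 1 by lra.
have lagrange : (x1 * (u1 + w1) + x2 * (u2 + w2))^+2 + (x1 * (u2 + w2) - x2 * (u1 + w1))^+2
    = (x1^+2 + x2^+2) * ((u1 + w1)^+2 + (u2 + w2)^+2) by ring.
rewrite hXS expr1n in lagrange.
have := mulr_ge0 (_ : 0 <= x1^+2 + x2^+2) hS; have := sqr_ge0 (x1 * (u2 + w2) - x2 * (u1 + w1)).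
move=> h1 h2; have hx3 : x3^+2 <= 0 by nra.
by apply/eqP; rewrite -sqrf_eq0 eq_le hx3 sqr_ge0.
Qed.

Lemma middle_triangle_apexes U W P Q X Y : unit_apex U P -> unit_apex W Q ->
  dot U W <= - 1 / 2 -> X = U \/ X = P -> Y = W \/ Y = Q ->
  X = Y \/ dot (vsub X Y) (vsub X Y) = 1 -> [/\ X = P, Y = Q & dot P Q = 1 / 2].
Proof.
move=> [hUz hUU hPP hPU hPz] [hWz hWW hQQ hQW hQz] hUW.
have flat := unit_equidistant_horizontal hUz hWz hUU hWW hUW.
have hQU : dot Q U <> 1 / 2 by move=> e; move: hQz; rewrite (flat Q) ?ltxx.
have hPW : dot P W <> 1 / 2 by move=> e; move: hPz; rewrite (flat P) ?ltxx.
case=> -> [] -> [e|]; rewrite ?dot_subsq.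
- by exfalso; move: hUW; rewrite e hWW; lra.
- by rewrite hUU hWW => h; exfalso; lra.
- by exfalso; move: hQz; rewrite -e hUz ltxx.
- by rewrite (dotC U) hUU hQQ => h; case: hQU; lra.
- by exfalso; move: hPz; rewrite e hWz ltxx.
- by rewrite hPP hWW => h; case: hPW; lra.
- by case: hPW; rewrite e hQW.
- by rewrite hPP hQQ => h; split=> //; lra.
Qed.

End MiddleTriangle.

Section DomeGeometry.
Variable R : realType.
Implicit Types (K P F : set (vec R)) (TS : seq (triangle R)) (t : triangle R).
Implicit Types (a b c u w x y n m : vec R).

Lemma dot_subr n x y : dot n (vsub x y) = dot n x - dot n y.
Proof. by rewrite /dot /=; ring. Qed.

Lemma vsub_vsub x y b : vsub (vsub x b) (vsub y b) = vsub x y.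
Proof. by apply: vecE; rewrite /=; ring. Qed.

Lemma vsubK b x : vadd (vsub x b) b = x.
Proof. by apply: vecE; rewrite /=; ring. Qed.

Lemma vsubIr b : injective (fun x : vec R => vsub x b).
Proof. by move=> x y e; rewrite -(vsubK b x) -(vsubK b y) e. Qed.

Lemma segment_left a b : segment b a b.
Proof. by exists 0; split; [rewrite lexx ler01 | apply: vecE; rewrite /=; ring]. Qed.

(* If [U.W = -1], then [w] lies on the supporting line of the edge [[b,a]] on the far
   side of [b], whereas that line meets [P] exactly in [[b,a]]. *)
Lemma edge_dirs_gtN1 P b a u w : polygon_edge P b a -> segment b a u -> u <> b -> P w ->
  dot (vsub u b) (vsub u b) = 1 -> dot (vsub w b) (vsub w b) = 1 ->
  -1 < dot (vsub u b) (vsub w b).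
Proof.
move=> [hba [m [d [_ _ _ hedge]]]] su hub Pw hU hW.
have on_edge x : segment b a x -> dot m x = d by rewrite -hedge => -[].
rewrite ltNge; apply/negP => hle.
have hsum : vadd (vsub u b) (vsub w b) = vzero R.
  case: (pselect (vadd (vsub u b) (vsub w b) = vzero R)) => [//|hne]; exfalso.
  by have := dot_gt0 hne; rewrite dot_addsq hU hW; lra.
have sw : segment b a w.
  rewrite -hedge; split=> //=.
  have -> : dot m w = dot m (vadd (vsub u b) (vsub w b)) - dot m u + 2 * dot m b
    by rewrite /dot /=; ring.
  by rewrite hsum (on_edge _ su) (on_edge _ (segment_left a b)) /dot /=; ring.
have [k hk eu] := segment_dir_pos su hub.
have [l [/andP[hl _] ew]] := segment_dir sw.
have hkl : k + l != 0 by apply: lt0r_neq0; lra.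
have zero (z : R) : k * z + l * z = 0 -> z = 0.
  by rewrite -mulrDl => /eqP; rewrite mulf_eq0 (negbTE hkl) => /eqP.
rewrite eu ew in hsum; apply: hba; apply: vecE; apply/eqP; rewrite eq_sym -subr_eq0;
  apply/eqP; apply: zero.
- by move/(congr1 (@vx R)): hsum.
- by move/(congr1 (@vy R)): hsum.
- by move/(congr1 (@vz R)): hsum.
Qed.

Lemma dist1_dot x y : dist x y = 1 -> dot (vsub x y) (vsub x y) = 1.
Proof. by rewrite /dist /norm => h; rewrite -(@sqr_sqrtr _ (dot _ _)) ?dot_ge0 // h expr1n. Qed.

Lemma unit_equilateral_neq t : unit_equilateral t ->
  [/\ t.1.1 <> t.1.2, t.1.2 <> t.2 & t.2 <> t.1.1].
Proof.
have dist0 x : dist x x <> 1.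
  by rewrite /dist /norm /dot /= !subrr !mulr0 !addr0 sqrtr0 => /eqP; rewrite eq_sym oner_eq0.
by case=> h1 h2 h3; split=> e; [move: h1 | move: h2 | move: h3]; rewrite e; apply: dist0.
Qed.

Lemma unit_equilateral_dist t x y : unit_equilateral t -> is_vertex t x -> is_vertex t y ->
  x <> y -> dot (vsub x y) (vsub x y) = 1.
Proof.
move=> ht; have [h1 h2 h3] := ht; have [n1 n2 n3] := unit_equilateral_neq ht.
have d1 := dist1_dot h1; have d2 := dist1_dot h2; have d3 := dist1_dot h3.
have sym x' y' : dot (vsub x' y') (vsub x' y') = dot (vsub y' x') (vsub y' x').
  by rewrite /dot /=; ring.
by case=> [->|[->|->]] [->|[->|->]] // _; rewrite ?d1 ?d2 ?d3 // sym ?d1 ?d2 ?d3.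
Qed.

Lemma third_vertex t b u : unit_equilateral t -> is_vertex t b -> is_vertex t u -> b <> u ->
  exists p, [/\ is_vertex t p, p <> b, p <> u &
    forall v, is_vertex t v -> [\/ v = b, v = u | v = p]].
Proof.
move=> ht; have [n1 n2 n3] := unit_equilateral_neq ht; rewrite /is_vertex.
case=> [->|[->|->]] [->|[->|->]] // _;
  [exists t.2 | exists t.1.2 | exists t.2 | exists t.1.1 | exists t.1.2 | exists t.1.1];
  split; auto => v [->|[->|->]]; auto using Or31, Or32, Or33.
Qed.

Lemma tri_set_vertex t x : is_vertex t x -> tri_set t x.
Proof.
case=> [->|[->|->]]; [exists 1, 0, 0 | exists 0, 1, 0 | exists 0, 0, 1];
  (split; [lra | lra | lra | lra | apply: vecE; rewrite /=; ring]).
Qed.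

Lemma noncollinear_unit x y z : dot (vsub y x) (vsub y x) = 1 ->
  dot (vsub z x) (vsub z x) = 1 -> dot (vsub z y) (vsub z y) = 1 -> noncollinear x y z.
Proof.
move=> h1 h2 h3 hc.
have lagrange : dot (cross (vsub y x) (vsub z x)) (cross (vsub y x) (vsub z x)) =
  dot (vsub y x) (vsub y x) * dot (vsub z x) (vsub z x) - (dot (vsub y x) (vsub z x))^+2.
  by rewrite /dot /=; ring.
have : dot (vsub z y) (vsub z y) = dot (vsub y x) (vsub y x)
    - 2 * dot (vsub y x) (vsub z x) + dot (vsub z x) (vsub z x) by rewrite /dot /=; ring.
move: lagrange; rewrite hc h1 h2 h3 /dot /= !mulr0 !addr0; nra.
Qed.

End DomeGeometry.

Section Dome.
Variable R : realType.
Implicit Types (K P F : set (vec R)) (TS : seq (triangle R)) (t : triangle R).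
Implicit Types (a b c u w x y z n m : vec R).

Lemma plane_through_horizontal n (d : R) x y z : n <> vzero R ->
  dot n x = d -> dot n y = d -> dot n z = d -> noncollinear x y z ->
  vz x = 0 -> vz y = 0 -> vz z = 0 -> forall v, dot n v = d <-> vz v = 0.
Proof.
case: n => n1 n2 n3; case: x => x1 x2 x3; case: y => y1 y2 y3; case: z => z1 z2 z3.
rewrite /noncollinear /dot /= => hn hx hy hz hnc hx3 hy3 hz3.
rewrite hx3 hy3 hz3 !mulr0 !addr0 in hx hy hz hnc.
set D := (y1 - x1) * (z2 - x2) - (y2 - x2) * (z1 - x1).
have hD : D != 0.
  by apply/eqP => D0; apply: hnc; apply: vecE; rewrite /= ?subrr ?mulr0 ?mul0r ?subrr.
have e1 : n1 * (y1 - x1) + n2 * (y2 - x2) = 0 by lra.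
have e2 : n1 * (z1 - x1) + n2 * (z2 - x2) = 0 by lra.
have n10 : n1 = 0.
  have : n1 * D = (z2 - x2) * (n1 * (y1 - x1) + n2 * (y2 - x2))
                  - (y2 - x2) * (n1 * (z1 - x1) + n2 * (z2 - x2)) by rewrite /D; ring.
  by rewrite e1 e2 !mulr0 subrr => /eqP; rewrite mulf_eq0 (negbTE hD) orbF => /eqP.
have n20 : n2 = 0.
  have : n2 * D = (y1 - x1) * (n1 * (z1 - x1) + n2 * (z2 - x2))
                  - (z1 - x1) * (n1 * (y1 - x1) + n2 * (y2 - x2)) by rewrite /D; ring.
  by rewrite e1 e2 !mulr0 subrr => /eqP; rewrite mulf_eq0 (negbTE hD) orbF => /eqP.
have n30 : n3 != 0 by apply/eqP => n30; apply: hn; rewrite n10 n20 n30.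
have d0 : d = 0 by rewrite -hx n10 n20; ring.
case=> v1 v2 v3 /=; rewrite n10 n20 d0 !mul0r !add0r; split=> [/eqP|->]; last by rewrite mulr0.
by rewrite mulf_eq0 (negbTE n30) => /eqP.
Qed.

Lemma face_sub K F x : face K F -> F x -> K x.
Proof. by case=> n [d [_ -> _]] []. Qed.

Lemma face_not_horizontal K P F : face K P -> (forall x, P x -> vz x = 0) ->
  face K F -> F <> P -> forall x y z, F x -> F y -> F z -> noncollinear x y z ->
  vz x = 0 -> vz y = 0 -> vz z = 0 -> False.
Proof.
move=> [m [d [[hm _] HP [x' [y' [z' [Px Py Pz hnc']]]]]]] Pflat.
move=> [n [c [[hn _] HF _]]] hFP x y z Fx Fy Fz hnc xz yz zz.
have onP v : P v -> dot m v = d by rewrite HP => -[].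
have onF v : F v -> dot n v = c by rewrite HF => -[].
have zP := plane_through_horizontal hm (onP _ Px) (onP _ Py) (onP _ Pz) hnc'
  (Pflat _ Px) (Pflat _ Py) (Pflat _ Pz).
have zF := plane_through_horizontal hn (onF _ Fx) (onF _ Fy) (onF _ Fz) hnc xz yz zz.
apply: hFP; rewrite HF HP; apply: funext => v; apply: propext.
by split=> -[Kv hv]; split=> //; [apply/zP/zF | apply/zF/zP].
Qed.

Lemma dome_triangle_plane K P TS t : is_dome K P TS -> List.In t TS ->
  exists n (d : R), [/\ supports K n d, (forall v, is_vertex t v -> K v /\ dot n v = d) &
    ~ (forall v, is_vertex t v -> vz v = 0)].
Proof.
move=> [_ [hP [Pflat [_ [htri _]]]]] tin.
have [hu [F [hF hFP hsub]]] := htri t tin.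
have [n [d [hs HF _]]] := hF.
have Fv v : is_vertex t v -> F v by move=> hv; apply: hsub; apply: tri_set_vertex.
exists n, d; split=> // [v /Fv|hz]; first by rewrite HF => -[].
have v1 : is_vertex t t.1.1 by left.
have v2 : is_vertex t t.1.2 by right; left.
have v3 : is_vertex t t.2 by right; right.
have [n12 n23 n31] := unit_equilateral_neq hu.
apply: (face_not_horizontal hP Pflat hF hFP (Fv _ v1) (Fv _ v2) (Fv _ v3));
  rewrite ?hz //.
by apply: noncollinear_unit; apply: (unit_equilateral_dist hu) => //; apply: nesym.
Qed.

End Dome.

Section DomeVertex.
Variable R : realType.
Implicit Types (K P : set (vec R)) (TS : seq (triangle R)) (t : triangle R).
Implicit Types (a b u v x y : vec R).

Lemma polygon_edge_segment P b a x : polygon_edge P b a -> segment b a x -> P x.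
Proof. by case=> _ [m [d [_ _ _ hedge]]]; rewrite -hedge => -[]. Qed.

Lemma share_side_other t t' b : share_side t t' ->
  exists x, [/\ is_vertex t x, is_vertex t' x & x <> b].
Proof.
case=> x [y [hxy hx hy hx' hy']]; case: (pselect (x = b)) => [xb|]; last by exists x.
by exists y; split=> // yb; apply: hxy; rewrite xb yb.
Qed.

Lemma edge_triangle_apex K P TS t b u : is_dome K P TS -> List.In t TS ->
  is_vertex t b -> is_vertex t u -> u <> b -> P b -> P u ->
  exists p, [/\ is_vertex t p, forall v, is_vertex t v -> v <> b -> v = u \/ v = p &
    unit_apex (vsub u b) (vsub p b)].
Proof.
move=> hd tin tb tu hub Pb Pu; have [_ [_ [Pflat [Kup [htri _]]]]] := hd.
have [hunit _] := htri t tin.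
have [p [tp hpb hpu hV]] := third_vertex hunit tb tu (nesym hub).
have [n [d [_ hK hnflat]]] := dome_triangle_plane hd tin.
exists p; split=> //.
  by move=> v /hV [->|->|->] hvb; [case: hvb | left | right].
have unit1 x y : is_vertex t x -> is_vertex t y -> x <> y -> dot (vsub x y) (vsub x y) = 1.
  exact: unit_equilateral_dist.
have hPU := unit1 _ _ tp tu hpu.
rewrite -(vsub_vsub p u b) dot_subsq (unit1 _ _ tp tb hpb) (unit1 _ _ tu tb hub) in hPU.
split.
- by rewrite /= (Pflat _ Pu) (Pflat _ Pb) subrr.
- exact: unit1.
- exact: unit1.
- by lra.
rewrite /= (Pflat _ Pb) subr0 lt_neqAle (Kup _ (hK p tp).1) andbT.
apply/eqP => p0; apply: hnflat => v /hV [->|->|->]; [exact: Pflat | exact: Pflat | by []].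
Qed.

Lemma dome_vertex_in K P TS t v : is_dome K P TS -> List.In t TS -> is_vertex t v -> K v.
Proof. by move=> hd tin; have [n [d [_ hK _]]] := dome_triangle_plane hd tin; case/hK. Qed.

Lemma dome_facet_normal K P TS t b x1 x2 y1 y2 : is_dome K P TS -> List.In t TS ->
  is_vertex t b -> is_vertex t x1 -> is_vertex t x2 -> K y1 -> K y2 ->
  exists n (d : R), [/\ supports K n d, forall v, is_vertex t v -> dot n v = d &
    facet_normal n (vsub x1 b) (vsub x2 b) (vsub y1 b) (vsub y2 b)].
Proof.
move=> hd tin tb tx1 tx2 Ky1 Ky2.
have [n [d [[hn hsup] hK _]]] := dome_triangle_plane hd tin.
have on v : is_vertex t v -> dot n v = d by move=> /hK [].
have rel v : dot n (vsub v b) = dot n v - d by rewrite dot_subr (on b tb).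
exists n, d; split=> //; split=> //; rewrite rel ?subr_le0.
- by rewrite on ?subrr.
- by rewrite on ?subrr.
- exact: hsup.
- exact: hsup.
Qed.

Lemma middle_triangle_vertices K P TS t1 t2 t3 b u p w q :
  is_dome K P TS -> List.In t2 TS -> share_side t1 t2 -> share_side t2 t3 ->
  (forall v, is_vertex t1 v -> v <> b -> v = u \/ v = p) ->
  (forall v, is_vertex t3 v -> v <> b -> v = w \/ v = q) ->
  unit_apex (vsub u b) (vsub p b) -> unit_apex (vsub w b) (vsub q b) ->
  dot (vsub u b) (vsub w b) <= - 1 / 2 ->
  [/\ is_vertex t2 p, is_vertex t2 q & dot (vsub p b) (vsub q b) = 1 / 2].
Proof.
move=> hd in2 sh12 sh23 hV1 hV3 hUP hWQ hUW.
have [x [x1 x2 xb]] := share_side_other b sh12.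
have [y [y2 y3 yb]] := share_side_other b sh23.
have : [/\ vsub x b = vsub p b, vsub y b = vsub q b & dot (vsub p b) (vsub q b) = 1 / 2].
  apply: (middle_triangle_apexes hUP hWQ hUW).
  - by case: (hV1 x x1 xb) => ->; [left | right].
  - by case: (hV3 y y3 yb) => ->; [left | right].
  - case: (pselect (x = y)) => [->|nxy]; [by left | right].
    have [_ [_ [_ [_ [htri _]]]]] := hd.
    by rewrite vsub_vsub; apply: (unit_equilateral_dist (htri _ in2).1 x2 y2 nxy).
by case=> /vsubIr <- /vsubIr <-.
Qed.

End DomeVertex.

Theorem lemma7 (R : realType) (K P : set (vec R)) (TS : seq (triangle R))
    (b a c : vec R) (t1 t2 t3 : triangle R) :
  is_dome K P TS ->
  (* b is a vertex of P with incident edges [b,a] and [b,c] *)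
  polygon_edge P b a -> polygon_edge P b c -> a <> c ->
  (* interior angle at b is at least 120 degrees *)
  2 * pi / 3 <= angle_at b a c ->
  (* t1, t2, t3 are the three dome triangles incident to b, in order *)
  List.In t1 TS -> List.In t2 TS -> List.In t3 TS ->
  is_vertex t1 b -> is_vertex t2 b -> is_vertex t3 b ->
  tri_set t1 <> tri_set t2 -> tri_set t2 <> tri_set t3 -> tri_set t1 <> tri_set t3 ->
  (forall t, List.In t TS -> is_vertex t b ->
     [\/ tri_set t = tri_set t1, tri_set t = tri_set t2 | tri_set t = tri_set t3]) ->
  share_side t1 t2 -> share_side t2 t3 ->
  incident_to_edge t1 b a -> incident_to_edge t3 b c ->
  upward_normal K t2 /\ (downward_normal K t1 \/ downward_normal K t3).
Proof.
move=> hd pa pc _ hang in1 in2 in3 b1 b2 b3 _ _ _ _ sh12 sh23 [u [u1 ub su]] [w [w3 wb sw]].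
have Pb := polygon_edge_segment pa (segment_left a b).
have Pu := polygon_edge_segment pa su.
have Pw := polygon_edge_segment pc sw.
have [p [p1 hV1 hUP]] := edge_triangle_apex hd in1 b1 u1 ub Pb Pu.
have [q [q3 hV3 hWQ]] := edge_triangle_apex hd in3 b3 w3 wb Pb Pw.
have [_ hUU _ _ _] := hUP; have [_ hWW _ _ _] := hWQ.
have hUW : -1 < dot (vsub u b) (vsub w b) <= - 1 / 2.
  by rewrite (edge_dirs_gtN1 pa su ub Pw hUU hWW) (edge_dirs_dot_le su sw ub wb hUU hWW hang).
have [p2 q2 hPQ] :=
  middle_triangle_vertices hd in2 sh12 sh23 hV1 hV3 hUP hWQ (proj2 (andP hUW)).
have [Ku Kw] := (face_sub (proj1 (proj2 hd)) Pu, face_sub (proj1 (proj2 hd)) Pw).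
have [Kp Kq] := (dome_vertex_in hd in1 p1, dome_vertex_in hd in3 q3).
have [n1 [c1 [s1 on1 hN1]]] := dome_facet_normal hd in1 b1 u1 p1 Kw Kq.
have [n2 [c2 [s2 on2 hN2]]] := dome_facet_normal hd in2 b2 p2 q2 Ku Kw.
have [n3 [c3 [s3 on3 hN3]]] := dome_facet_normal hd in3 b3 w3 q3 Ku Kp.
have [up down] := vertex_cone_normals hUP hWQ hUW hPQ hN1 hN2 hN3.
split; first by exists n2, c2.
by case: down => ?; [left; exists n1, c1 | right; exists n3, c3].
Qed.
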